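(* Let $d\ge0$, $n\ge d+1$. There is a Zariski-open dense subset $U\subset\mathbb{R}^n\times\mathbb{R}^{n-d}$ such that the restriction of the higher Prony map $\Phi_{d,n}$ to $U\cap\{x_1<\cdots<x_n,\ \alpha_i\ne0\ \forall i\}$ is injective. Moreover, for $(x,\alpha)$ in this set and $M=\Phi_{d,n}(x,\alpha)$: the Hankel matrix $H_M$ has one-dimensional kernel; the roots of its kernel polynomial $p_M$ are $x_1,\dots,x_n$; and $\alpha$ is the unique solution of the square linear system $A_{d,n}(\mathcal{X})\alpha=b(M)$, where $b(M)=(\binom{r+d}{d}m_r)_{0\le r\le n-d-1}$. Furthermore, $\sum_i\alpha_i\mu_{(x_i,\dots,x_{i+d})}$ lies in the positive simplicial spline cone iff $A_{d,n}(\mathcal{X})^{-1}b(M)$ has nonnegative coordinates.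
   Context: $\mu_V$ for a list $V=(v_1,\dots,v_{d+1})$ is the law of $\sum_k\lambda_kv_k$ with $\lambda$ uniform on the standard simplex $\{\lambda\in\mathbb{R}^{d+1}_{\ge0}:\sum\lambda_k=1\}$. The positive simplicial spline cone for $\mathcal{X}=\{x_1,\dots,x_n\}$ is $\{\sum_i\beta_i\mu_{(x_i,\dots,x_{i+d})}:\beta_i\ge0\}$. The higher Prony map $\Phi_{d,n}:\mathbb{R}^n\times\mathbb{R}^{n-d}\to\mathbb{R}^{2n-d}$ sends $(x;\alpha)$ to $M=(m_0,\dots,m_{2n-d-1})$ with $m_j=\binom{j+d}{d}^{-1}\sum_{i=1}^{n-d}\alpha_ih_j(x_i,\dots,x_{i+d})$, $h_j$ the complete homogeneous symmetric polynomial. Normalized sequence: $c_0=\cdots=c_{d-1}=0$, $c_{d+i}=\binom{i+d}{d}m_i$. $H_M=(c_{i+j})_{0\le i\le n-1,\,0\le j\le n}$; the kernel polynomial is $p_M(t)=\sum_{k=0}^nu_kt^k$ for $(u_0,\dots,u_n)$ spanning $\ker H_M$. $A_{d,n}(\mathcal{X})=(h_r(x_i,\dots,x_{i+d}))_{0\le r\le n-d-1,\,1\le i\le n-d}$. *)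

From HB Require Import structures.
From mathcomp Require Import all_boot all_order all_algebra.
From mathcomp Require Import all_classical all_reals all_analysis.
From mathcomp Require mpoly.

Set Implicit Arguments.
Unset Strict Implicit.
Unset Printing Implicit Defensive.

Import Order.TTheory GRing.Theory Num.Theory.
Local Open Scope classical_set_scope.
Local Open Scope ring_scope.

Section HigherProny.
Variable R : realType.

Definition zariski_closed (N : nat) (Z : set ('I_N -> R)) : Prop :=
  exists (k : nat) (f : 'I_k -> mpoly.mpoly N R),
    Z = [set v | forall i, mpoly.meval v (f i) = 0].

Definition zariski_open (N : nat) (U : set ('I_N -> R)) : Prop :=
  zariski_closed (~` U).

Definition zariski_dense (N : nat) (U : set ('I_N -> R)) : Prop :=
  forall Z, zariski_closed Z -> U `<=` Z -> Z = setT.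

Definition coord (N : nat) (p : 'I_N -> R) (k : nat) : R :=
  if insub k is Some i then p i else 0.

(* x_{k+1} = xs p k  (0 <= k < n),  alpha_{i+1} = als p i  (0 <= i < n-d) *)
Definition xs (n d : nat) (p : 'I_(n + (n - d)) -> R) (k : nat) : R := coord p k.
Definition als (n d : nat) (p : 'I_(n + (n - d)) -> R) (i : nat) : R := coord p (n + i).

(* the knot list (x_{i+1}, ..., x_{i+d+1}) *)
Definition window (n d : nat) (p : 'I_(n + (n - d)) -> R) (i : nat) : seq R :=
  [seq xs p (i + k) | k <- iota 0 d.+1].

Definition hcomp (j : nat) (v : seq R) : R :=
  \sum_(e : {ffun 'I_(size v) -> 'I_j.+1} | (\sum_(k < size v) (e k : nat))%N == j)
     \prod_(k < size v) v`_k ^+ e k.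

Definition moment (n d : nat) (p : 'I_(n + (n - d)) -> R) (j : nat) : R :=
  ('C(j + d, d))%:R^-1 * \sum_(i < n - d) als p i * hcomp j (window p i).

Definition prony (n d : nat) (p : 'I_(n + (n - d)) -> R) : seq R :=
  [seq moment p j | j <- iota 0 (2 * n - d)].

Definition cnorm (d : nat) (M : seq R) (k : nat) : R :=
  if (k < d)%N then 0 else ('C(k, d))%:R * M`_(k - d).

Definition hankel (n d : nat) (M : seq R) : 'M[R]_(n, n.+1) :=
  \matrix_(i < n, j < n.+1) cnorm d M (i + j).

Definition kerpoly (n : nat) (u : 'cV[R]_n.+1) : {poly R} :=
  \poly_(k < n.+1) u (inord k) 0.

Definition Amat (n d : nat) (p : 'I_(n + (n - d)) -> R) : 'M[R]_(n - d) :=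
  \matrix_(r < n - d, i < n - d) hcomp r (window p i).

Definition bvec (n d : nat) (M : seq R) : 'cV[R]_(n - d) :=
  \col_(r < n - d) (('C(r + d, d))%:R * M`_r).

Definition alcol (n d : nat) (p : 'I_(n + (n - d)) -> R) : 'cV[R]_(n - d) :=
  \col_(i < n - d) als p i.

(* iterated Lebesgue integral over the simplex
   { (t_1,...,t_k) : t_i >= 0, sum t_i <= s } of the indicator of A at
   acc + sum_i t_i v_i + (s - sum_i t_i) v_last *)
Fixpoint simplex_int (A : set R) (vs : seq R) (s acc : R) {struct vs} : \bar R :=
  match vs with
  | [::] => 0%E
  | [:: v] => ((\1_A (acc + s * v)) : R)%:E
  | v :: vs' =>
      (\int[@lebesgue_measure R]_(t in `[0%R, s]%classic) simplex_int A vs' (s - t) (acc + t * v))%E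
  end.

(* mu_V(A) for V = (v_1, ..., v_{d+1}): the law of sum_k lambda_k v_k with
   lambda uniform on the standard simplex, i.e. d! times Lebesgue measure
   in the coordinates (lambda_1, ..., lambda_d) *)
Definition simplex_spline (V : seq R) (A : set R) : R :=
  ((size V).-1)`!%:R * fine (simplex_int A V 1 0).

Definition spline_comb (n d : nat) (p : 'I_(n + (n - d)) -> R)
    (beta : 'I_(n - d) -> R) (A : set R) : R :=
  \sum_(i < n - d) beta i * simplex_spline (window p i) A.

Definition in_spline_cone (n d : nat) (p : 'I_(n + (n - d)) -> R)
    (nu : set R -> R) : Prop :=
  exists beta : 'I_(n - d) -> R, (forall i, 0 <= beta i) /\
    forall A : set R, measurable A -> nu A = spline_comb p beta A.

Definition good_domain (n d : nat) : set ('I_(n + (n - d)) -> R) :=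
  [set p | (forall k, (k.+1 < n)%N -> xs p k < xs p k.+1) /\
           (forall i, (i < n - d)%N -> als p i != 0)].

End HigherProny.

From Pilot Require Import Defs.
From HB Require Import structures.
From mathcomp Require Import all_boot all_order all_algebra.
From mathcomp Require Import all_classical all_reals all_analysis.
From mathcomp Require Import ring lra zify.
From mathcomp Require mpoly.
Import (canonicals, coercions, hints) mpoly.
Import Order.TTheory GRing.Theory Num.Theory.
Local Open Scope classical_set_scope.
Local Open Scope ring_scope.
Set Implicit Arguments.
Unset Strict Implicit.
Unset Printing Implicit Defensive.

(* The normalized moments are [c_k = \sum_i alpha_i [x_i, ..., x_(i+d)] t^k], divided
   differences of powers over the windows of knots; hence [c_k = \sum_l w_l x_l^k] for
   weights [w_l] rational in [(x, alpha)], and [H_M = V diag(w) V'^T] with Vandermonde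
   matrices [V], [V'].  Where no [w_l] vanishes -- a dense Zariski open condition once
   denominators are cleared -- [H_M] has rank [n] and every kernel polynomial vanishes
   exactly at the knots, so [M] determines [x]; [alpha] is then recovered from the
   system [A alpha = b(M)], whose matrix is invertible by the same Vandermonde argument
   and the triangular shape of the weights.  The splines of consecutive windows are
   linearly independent (test them on the half-lines [(-oo, x_(i+1))]), which yields
   the cone criterion. *)

Section CompleteHomogeneous.
Variable R : comNzRingType.

Fixpoint hsym (r : nat) (v : seq R) : R :=
  match r with
  | 0 => 1
  | r'.+1 => (fix hsym_r (v : seq R) := match v with
                | [::] => 0 | a :: w => a * hsym r' (a :: w) + hsym_r w end) v
  end.

Lemma hsymS r a w : hsym r.+1 (a :: w) = a * hsym r (a :: w) + hsym r.+1 w.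
Proof. by []. Qed.

Lemma hsym_seq1 r a : hsym r [:: a] = a ^+ r.
Proof. by elim: r => // r IH; rewrite hsymS IH addr0 exprS. Qed.

Lemma hsymSB r a b w :
  hsym r.+1 (a :: w) - hsym r.+1 (b :: w) = (a - b) * hsym r [:: a, b & w].
Proof.
elim: r => [|r IH]; first by rewrite !hsymS /=; ring.
rewrite hsymS [hsym r.+2 (b :: w)]hsymS [hsym r.+1 [:: a, b & w]]hsymS.
have -> : hsym r.+1 (a :: w) = hsym r.+1 (b :: w) + (a - b) * hsym r [:: a, b & w].
  by rewrite -IH; ring.
ring.
Qed.

Definition geom_trunc (B : nat) (c : R) : {poly R} := \sum_(i < B) (c ^+ i) *: 'X^i.

Lemma geom_truncS B c : geom_trunc B.+1 c = 1 + 'X * (c *: geom_trunc B c).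
Proof.
rewrite /geom_trunc big_ord_recl /= expr0 scale1r; congr (_ + _).
rewrite scaler_sumr mulr_sumr; apply: eq_bigr => i _.
by rewrite /bump /= add1n scalerA -exprS -scalerAr -exprS.
Qed.

(* The generating function of [hsym _ v] is [\prod_(c <- v) 1 / (1 - c X)];
   truncating each factor beyond degree [r] does not affect the [r]-th coefficient. *)
Lemma coef_prod_geom_trunc r (s : seq (R * nat)) :
  all (fun q => r < q.2)%N s ->
  (\prod_(q <- s) geom_trunc q.2 q.1)`_r = hsym r (map fst s).
Proof.
elim: r s => [|r IH] s.
  elim: s => [|[c B] s IHs] /=; first by rewrite big_nil coefC.
  case/andP => hB hs; rewrite big_cons coef0M IHs //.
  by case: B hB => // B _; rewrite geom_truncS coefD coef1 coefXM /= mulr1 addr0.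
elim: s => [|[c B] s IHs] /=; first by rewrite big_nil coefC.
case/andP => hB hs; rewrite big_cons /=.
case: B hB => // B hB; rewrite geom_truncS mulrDl mul1r coefD -mulrA coefXM /=.
rewrite -scalerAl coefZ addrC; congr (_ + _); last exact: IHs.
congr (_ * _); have := IH ((c, B) :: s); rewrite big_cons; apply.
by rewrite /= -ltnS hB; apply/allP => q /(allP hs); apply: ltnW.
Qed.

End CompleteHomogeneous.

Lemma hcomp_hsym (R : realType) j (v : seq R) : hcomp j v = hsym j v.
Proof.
have -> : hsym j v = (\prod_(q <- [seq (c, j.+1) | c <- v]) geom_trunc q.2 q.1)`_j.
  rewrite coef_prod_geom_trunc; first by rewrite -map_comp map_id.
  by apply/allP => q /mapP [c _ ->].
rewrite big_map (big_nth 0) big_mkord /geom_trunc /= bigA_distr_bigA /= coef_sum.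
rewrite /hcomp big_mkcond /=; apply: eq_bigr => e _.
have -> : \prod_(i < size v) (v`_i ^+ e i *: 'X^(e i)) =
    (\prod_(i < size v) v`_i ^+ e i) *: 'X^(\sum_(i < size v) (e i : nat)).
  rewrite -prodrXr; elim/big_rec3: _ => [|i a b c _ ->]; first by rewrite scale1r.
  by rewrite -!mul_polyC rmorphM /= mulrACA.
by rewrite coefZ coefXn eq_sym; case: eqP; rewrite ?mulr1 ?mulr0.
Qed.

Section DividedDifferences.
Variable R : fieldType.

Definition lagrange_den (a : R) (v : seq R) : R := \prod_(b <- v | b != a) (a - b).

(* Lagrange's formula: meaningful only for distinct nodes [v]. *)
Definition divdiff_pow (v : seq R) (k : nat) : R :=
  \sum_(a <- v) a ^+ k / lagrange_den a v.

Lemma lagrange_den_neq0 a v : lagrange_den a v != 0.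
Proof.
rewrite prodf_seq_neq0; apply/allP => b _ /=; apply/implyP => hb.
by rewrite subr_eq0 eq_sym.
Qed.

Lemma lagrange_den_self a v : lagrange_den a (a :: v) = lagrange_den a v.
Proof. by rewrite /lagrange_den big_cons eqxx. Qed.

Lemma lagrange_den_cons a b v : a != b ->
  lagrange_den a (b :: v) = (a - b) * lagrange_den a v.
Proof. by move=> ab; rewrite /lagrange_den big_cons eq_sym ab. Qed.

Lemma divdiff_pow_cons2 a b w k : a != b -> a \notin w -> b \notin w ->
  (a - b) * divdiff_pow [:: a, b & w] k = divdiff_pow (a :: w) k - divdiff_pow (b :: w) k.
Proof.
move=> ab aw bw.
have hab : a - b != 0 by rewrite subr_eq0.
have hba : b - a != 0 by rewrite subr_eq0 eq_sym.
have node_term c : c \in w ->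
    (a - b) * (c ^+ k / lagrange_den c [:: a, b & w])
    = c ^+ k / lagrange_den c (a :: w) - c ^+ k / lagrange_den c (b :: w).
  move=> cw; have ca : c != a by apply: contraNneq aw => <-.
  have cb : c != b by apply: contraNneq bw => <-.
  rewrite !lagrange_den_cons //; have := lagrange_den_neq0 c w => hP.
  have hca : c - a != 0 by rewrite subr_eq0.
  have hcb : c - b != 0 by rewrite subr_eq0.
  by field; rewrite hP hca hcb.
rewrite /divdiff_pow !big_cons mulrDr mulrDr mulr_sumr.
rewrite big_seq (eq_bigr _ node_term) -big_seq sumrB !lagrange_den_self.
rewrite [lagrange_den a _]lagrange_den_cons //.
rewrite [lagrange_den b _]lagrange_den_cons 1?eq_sym //.
rewrite lagrange_den_self.
have := lagrange_den_neq0 a w; have := lagrange_den_neq0 b w.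
set Pa := lagrange_den a w; set Pb := lagrange_den b w => hPb hPa.
set Sa := \sum_(_ <- _) _; set Sb := \sum_(_ <- _) _.
by field; rewrite hPa hPb hab hba.
Qed.

Lemma divdiff_powE s v : size v = s.+1 -> uniq v -> forall k,
  divdiff_pow v k = if (k < s)%N then 0 else hsym (k - s) v.
Proof.
elim: s v => [|s IH] v.
  case: v => [|a [|]] //= _ _ k.
  by rewrite /divdiff_pow /lagrange_den !big_cons !big_nil eqxx divr1 addr0 subn0 hsym_seq1.
case: v => [|a [|b w]] //= [sw] /andP [] /[!inE] /norP [ab aw] /andP [bw uw] k.
have IHa := IH (a :: w) ltac:(by rewrite /= sw) ltac:(by rewrite /= aw uw).
have IHb := IH (b :: w) ltac:(by rewrite /= sw) ltac:(by rewrite /= bw uw).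
have hab : a - b != 0 by rewrite subr_eq0.
rewrite -[divdiff_pow _ _](mulKf hab) divdiff_pow_cons2 // IHa IHb.
case: (ltnP k s) => hks; first by rewrite ltnS ltnW // subrr mulr0.
case: (ltnP k s.+1) => hk.
  have -> : k = s by apply/eqP; rewrite eqn_leq hks andbT -ltnS.
  by rewrite subnn subrr mulr0.
have -> : (k - s = (k - s.+1).+1)%N by rewrite subnS prednK // subn_gt0.
by rewrite hsymSB mulKf.
Qed.

End DividedDifferences.

Lemma roots_poly_eq0 (R : idomainType) (q : {poly R}) (s : seq R) :
  uniq s -> all (root q) s -> (size q <= size s)%N -> q = 0.
Proof.
move=> us rs hs; apply/eqP; apply: contraT => /max_poly_roots/(_ rs us).
by rewrite ltnNge hs.
Qed.

Section Vandermonde.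
Variable R : fieldType.

Lemma Vandermonde_unit n (a : 'rV[R]_n) :
  injective (a 0) -> Vandermonde n a \in unitmx.
Proof.
move=> ainj; rewrite unitmxE det_Vandermonde unitfE; apply/prodf_neq0 => i _.
apply/prodf_neq0 => j ij; rewrite subr_eq0; apply: contraTneq ij => /ainj ->.
by rewrite ltnn.
Qed.

Lemma power_sums_eq0 n (x z : 'I_n -> R) : injective x ->
  (forall K : 'I_n, \sum_(l < n) z l * x l ^+ K = 0) -> forall l, z l = 0.
Proof.
move=> xinj hz l; set V := Vandermonde n (\row_l x l).
have V_unit : V \in unitmx by apply: Vandermonde_unit => i j; rewrite !mxE => /xinj.
have : V *m \col_l z l = 0.
  apply/matrixP => K j; rewrite [RHS]mxE -(hz K) mxE.
  by apply: eq_bigr => i _; rewrite /V !mxE mulrC.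
move/(congr1 (mulmx (invmx V))); rewrite mulKmx // mulmx0 => /matrixP/(_ l 0).
by rewrite !mxE.
Qed.

Lemma row_free_trVandermonde m n (a : 'rV[R]_n) : (n <= m)%N -> injective (a 0) ->
  row_free (Vandermonde m a)^T.
Proof.
move=> nm ainj; apply/inj_row_free => w hw.
apply/rowP => l; rewrite mxE; apply: (power_sums_eq0 ainj) => K.
have /rowP/(_ (widen_ord nm K)) := hw; rewrite !mxE => sumK.
by rewrite -[RHS]sumK; apply: eq_bigr => i _; rewrite !mxE.
Qed.

Lemma exists_ker_neq0 m n (A : 'M[R]_(m, n)) : (m < n)%N ->
  exists2 u : 'cV_n, u != 0 & A *m u = 0.
Proof.
move=> mn; have : kermx A^T != 0.
  by rewrite kermx_eq0 /row_free mxrank_tr; have := rank_leq_row A; case: eqP => // ->; lia.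
have [i Ki | K0] := pickP (fun i => row i (kermx A^T) != 0); last first.
  by case/eqP; apply/row_matrixP => i; rewrite row0; apply/eqP; move/negbFE: (K0 i).
exists (row i (kermx A^T))^T; first by rewrite trmx_eq0.
by rewrite -[A in A *m _]trmxK -trmx_mul -row_mul mulmx_ker row0 trmx0.
Qed.

End Vandermonde.

Lemma big_ord_window (V : nmodType) (G : nat -> V) n d i : (i + d < n)%N ->
  \sum_(k < d.+1) G (i + k)%N = \sum_(l < n | (i <= l <= i + d)%N) G l.
Proof.
move=> idn; rewrite -(big_mkord xpredT (fun k => G (i + k)%N)).
rewrite -(big_mkord (fun l => i <= l <= i + d)%N).
have := big_addn 0 (i + d.+1) i xpredT G; rewrite add0n addKn => shift.
under eq_bigr do rewrite addnC.
rewrite -shift (big_nat_widen _ _ n); last by lia.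
rewrite (big_nat_widenl _ 0) //; apply: eq_bigl => l /=.
by rewrite addnS ltnS andbC.
Qed.

Section PronyAlgebra.
Variable R : realType.
Variables n d : nat.
Local Notation N := (n + (n - d))%N.
Implicit Types p : 'I_N -> R.

Definition increasing_knots p := forall k, (k.+1 < n)%N -> xs p k < xs p k.+1.

Definition alphas p (i : 'I_(n - d)) : R := als p i.

Lemma xs_lt p : increasing_knots p ->
  forall k l, (k < l)%N -> (l < n)%N -> xs p k < xs p l.
Proof.
move=> hx k; elim=> // l IH; rewrite ltnS leq_eqVlt => /orP [/eqP -> | kl] ln.
  exact: hx.
exact: lt_trans (IH kl (ltnW ln)) (hx _ ln).
Qed.

Lemma xs_inj p : increasing_knots p ->
  forall k l, (k < n)%N -> (l < n)%N -> xs p k = xs p l -> k = l.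
Proof.
move=> hx k l kn ln e; case: (ltngtP k l) => // h.
  by have := xs_lt hx h ln; rewrite e ltxx.
by have := xs_lt hx h kn; rewrite e ltxx.
Qed.

Lemma size_window p i : size (window p i) = d.+1.
Proof. by rewrite size_map size_iota. Qed.

Lemma uniq_window p i : increasing_knots p -> (i < n - d)%N -> uniq (window p i).
Proof.
move=> hx hi; rewrite map_inj_in_uniq ?iota_uniq // => a b.
rewrite !mem_iota !add0n => /andP [_ ha] /andP [_ hb] /(xs_inj hx) e.
by apply/eqP; rewrite -(eqn_add2l i) e //; lia.
Qed.

Definition knots p : seq R := [seq xs p k | k <- iota 0 n].

Lemma mem_knotsP p t : reflect (exists2 k, (k < n)%N & t = xs p k) (t \in knots p).
Proof.
apply: (iffP mapP) => [[k]|[k kn ->]]; last by exists k; rewrite // mem_iota.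
by rewrite mem_iota => /andP [_ kn] ->; exists k.
Qed.

Lemma sorted_knots p : increasing_knots p -> sorted <%R (knots p).
Proof.
move=> hx; rewrite /knots sorted_map.
apply: (@sub_in_sorted _ (gtn n) ltn); last exact: iota_ltn_sorted.
- by move=> k l kn ln /= kl; apply: xs_lt.
- by apply/allP => k; rewrite mem_iota.
Qed.

Lemma uniq_knots p : increasing_knots p -> uniq (knots p).
Proof.
move=> hx; rewrite map_inj_in_uniq ?iota_uniq // => k l.
by rewrite !mem_iota => /andP [_ kn] /andP [_ ln]; apply: xs_inj.
Qed.

Lemma divdiff_windowE p i K : increasing_knots p -> (i < n - d)%N ->
  divdiff_pow (window p i) K = if (K < d)%N then 0 else hcomp (K - d) (window p i).
Proof.
move=> hx hi; rewrite (divdiff_powE (size_window p i)) ?uniq_window //.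
by case: ltnP; rewrite ?hcomp_hsym.
Qed.

Definition knot_weight p (g : 'I_(n - d) -> R) (l : nat) : R :=
  \sum_(i < n - d | (i <= l <= i + d)%N) g i / lagrange_den (xs p l) (window p i).

Lemma sum_divdiff_window p g K :
  \sum_(i < n - d) g i * divdiff_pow (window p i) K
  = \sum_(l < n) knot_weight p g l * xs p l ^+ K.
Proof.
have divdiffE (i : 'I_(n - d)) : divdiff_pow (window p i) K =
    \sum_(l < n | (i <= l <= i + d)%N) xs p l ^+ K / lagrange_den (xs p l) (window p i).
  rewrite -(big_ord_window (fun l => xs p l ^+ K / lagrange_den (xs p l) (window p i)));
    last by have := ltn_ord i; lia.
  rewrite /divdiff_pow {1}/window big_map.
  by rewrite -[iota 0 d.+1]/(index_iota 0 d.+1) big_mkord.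
under eq_bigr do rewrite divdiffE mulr_sumr big_mkcond.
rewrite exchange_big; apply: eq_bigr => l _.
rewrite /knot_weight mulr_suml [RHS]big_mkcond; apply: eq_bigr => i _.
by case: ifP => _; rewrite ?mul0r //; ring.
Qed.

Lemma knot_weight_eq0 p g : (forall l, (l < n)%N -> knot_weight p g l = 0) -> g =1 0.
Proof.
move=> hW; suff gi0 m (i : 'I_(n - d)) : (i : nat) = m -> g i = 0 by move=> i; exact: gi0.
elim/ltn_ind: m i => m IH i im.
(* Among the windows containing [x_i], all but the [i]-th have zero coefficient. *)
have := hW i (leq_trans (ltn_ord i) (leq_subr _ _)).
rewrite /knot_weight (bigD1 i) /= ?leqnn ?leq_addr // big1 ?addr0; last first.
  move=> j /andP [/andP [ji _] neq_ji]; rewrite (IH j) ?mul0r // -im.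
  by rewrite ltn_neqAle ji andbT; apply: contra neq_ji => /eqP/val_inj ->.
by move/eqP; rewrite mulf_eq0 invr_eq0 (negbTE (lagrange_den_neq0 _ _)) orbF => /eqP.
Qed.

Lemma nth_prony p j : (j < 2 * n - d)%N -> (prony p)`_j = moment p j.
Proof. by move=> hj; rewrite (nth_map 0%N) ?size_iota // nth_iota. Qed.

Lemma binr_neq0 a b : (b <= a)%N -> ('C(a, b)%:R : R) != 0.
Proof. by move=> ba; rewrite pnatr_eq0 -lt0n bin_gt0. Qed.

Lemma cnorm_prony p k : increasing_knots p -> (k < 2 * n)%N ->
  cnorm d (prony p) k = \sum_(l < n) knot_weight p (alphas p) l * xs p l ^+ k.
Proof.
move=> hx hk; rewrite -sum_divdiff_window /cnorm; case: ltnP => kd.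
  by rewrite big1 // => i _; rewrite divdiff_windowE ?kd ?mulr0.
rewrite nth_prony; last by lia.
rewrite /moment subnK // mulrA mulfV ?binr_neq0 // mul1r.
by apply: eq_bigr => i _; rewrite divdiff_windowE // ltnNge kd.
Qed.

Lemma bvec_prony p : bvec n d (prony p) = Amat p *m alcol p.
Proof.
apply/matrixP => r j; rewrite !mxE nth_prony; last by have := ltn_ord r; lia.
rewrite /moment mulrA mulfV ?binr_neq0 ?leq_addl // mul1r.
by apply: eq_bigr => i _; rewrite !mxE mulrC.
Qed.

Lemma Amat_unit p : increasing_knots p -> Amat p \in unitmx.
Proof.
move=> hx; rewrite -unitmx_tr -row_free_unit; apply/inj_row_free => v hv.
have power_sums (K : 'I_n) : \sum_(l < n) knot_weight p (v 0) l * xs p l ^+ K = 0 :> R.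
  rewrite -sum_divdiff_window; case: (ltnP K d) => Kd.
    by rewrite big1 // => i _; rewrite divdiff_windowE ?Kd ?mulr0.
  have Kdn : (K - d < n - d)%N by have := ltn_ord K; lia.
  have /rowP/(_ (Ordinal Kdn)) := hv; rewrite !mxE => sumK.
  by rewrite -[RHS]sumK; apply: eq_bigr => i _; rewrite divdiff_windowE // ltnNge Kd !mxE.
have W0 (l : 'I_n) : knot_weight p (v 0) l = 0 :> R.
  apply: (@power_sums_eq0 _ n (fun l => xs p l) (fun l => knot_weight p (v 0) l)).
  - by move=> k k2 /(xs_inj hx (ltn_ord k) (ltn_ord k2)) /val_inj.
  - by move=> K; exact: power_sums.
by apply/rowP => i; rewrite mxE (knot_weight_eq0 (fun l ln => W0 (Ordinal ln))).
Qed.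

Lemma Amat_prony_eq p beta : increasing_knots p ->
  Amat p *m beta = bvec n d (prony p) <-> beta = alcol p.
Proof.
move=> hx; rewrite bvec_prony; split => [|->] // eqA.
by rewrite -(mulKmx (Amat_unit hx) beta) eqA mulKmx ?Amat_unit.
Qed.

Definition nonzero_weights p := forall l : 'I_n, knot_weight p (alphas p) l != 0.

Definition knot_row p : 'rV[R]_n := \row_(l < n) xs p l.
Definition prony_weights p : 'rV[R]_n := \row_(l < n) knot_weight p (alphas p) l.

Lemma knot_row_inj p : increasing_knots p -> injective (knot_row p 0).
Proof. by move=> hx k l; rewrite !mxE => /(xs_inj hx (ltn_ord k) (ltn_ord l)) /val_inj. Qed.

Lemma hankel_prony p : increasing_knots p ->
  hankel n d (prony p) = Vandermonde n (knot_row p) *m diag_mx (prony_weights p)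
                         *m (Vandermonde n.+1 (knot_row p))^T.
Proof.
move=> hx; apply/matrixP => i j; rewrite !mxE cnorm_prony //; last first.
  by have := ltn_ord i; have := ltn_ord j; lia.
by apply: eq_bigr => l _; rewrite mul_mx_diag !mxE exprD; ring.
Qed.

Lemma size_kerpoly (u : 'cV[R]_n.+1) : (size (kerpoly u) <= n.+1)%N.
Proof. exact: size_poly. Qed.

Lemma kerpoly_eq0 (u : 'cV[R]_n.+1) : kerpoly u = 0 -> u = 0.
Proof.
move=> u0; apply/matrixP => j k; rewrite ord1 mxE.
by have := congr1 (coefp j) u0; rewrite /= coef_poly ltn_ord inord_val coef0.
Qed.

Lemma horner_kerpoly (u : 'cV[R]_n.+1) t :
  (kerpoly u).[t] = \sum_(j < n.+1) u j 0 * t ^+ j.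
Proof. by rewrite horner_poly; apply: eq_bigr => j _; rewrite inord_val. Qed.

Section NonvanishingWeights.
Variable p : 'I_N -> R.
Hypothesis hx : increasing_knots p.
Hypothesis hw : nonzero_weights p.

Let VD := Vandermonde n (knot_row p) *m diag_mx (prony_weights p).

Let VD_unit : VD \in unitmx.
Proof.
rewrite unitmx_mul (Vandermonde_unit (knot_row_inj hx)) /= unitmxE det_diag unitfE.
by apply/prodf_neq0 => l _; rewrite mxE.
Qed.

Lemma rank_ker_hankel_prony : \rank (kermx (hankel n d (prony p))^T) = 1%N.
Proof.
rewrite mxrank_ker mxrank_tr hankel_prony // -/VD.
rewrite mxrankMfree ?(mxrank_unit VD_unit) ?subSnn //.
exact: row_free_trVandermonde (knot_row_inj hx).
Qed.

Lemma hankel_prony_ker_root u : hankel n d (prony p) *m u = 0 ->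
  forall l : 'I_n, root (kerpoly u) (xs p l).
Proof.
rewrite hankel_prony // -/VD -mulmxA => /(congr1 (mulmx (invmx VD))).
rewrite mulKmx ?VD_unit // mulmx0 => /matrixP Vu l; apply/eqP.
have := Vu l 0; rewrite !mxE => Vul; rewrite horner_kerpoly -[RHS]Vul.
by apply: eq_bigr => j _; rewrite !mxE mulrC.
Qed.

Lemma root_kerpoly_prony u : hankel n d (prony p) *m u = 0 -> u != 0 ->
  forall t, root (kerpoly u) t <-> exists2 k, (k < n)%N & t = xs p k.
Proof.
move=> Hu u0 t; split=> [tr|[k kn ->]]; last first.
  exact: (hankel_prony_ker_root Hu (Ordinal kn)).
have [/mem_knotsP //|t_new] := boolP (t \in knots p).
(* Otherwise [kerpoly u] would have [n.+1] distinct roots. *)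
case/eqP: u0; apply: kerpoly_eq0; apply: (@roots_poly_eq0 _ _ (t :: knots p)).
- by rewrite /= t_new uniq_knots.
- rewrite /= tr; apply/allP => y /mem_knotsP [k kn ->].
  exact: (hankel_prony_ker_root Hu (Ordinal kn)).
- by rewrite /= size_map size_iota size_kerpoly.
Qed.

End NonvanishingWeights.

End PronyAlgebra.

Lemma poly_eq0_of_horner (R : numDomainType) (q : {poly R}) :
  (forall t, q.[t] = 0) -> q = 0.
Proof.
move=> q0; apply: (@roots_poly_eq0 _ _ [seq i%:R | i <- iota 0 (size q)]).
- by rewrite map_inj_uniq ?iota_uniq // => i j /eqP; rewrite eqr_nat => /eqP.
- by apply/allP => t _; apply/eqP.
- by rewrite size_map size_iota.
Qed.

Section MpolyVanishing.
Variables (R : numDomainType) (N : nat).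
Local Notation MP := (mpoly.mpoly N R).

Lemma horner_mmap (h : 'I_N -> {poly R}) (f : MP) (t : R) :
  (mpoly.mmap polyC h f).[t] = mpoly.meval (fun i => (h i).[t]) f.
Proof.
rewrite /mpoly.mmap mpoly.mevalE horner_sum; apply: eq_bigr => m _.
rewrite hornerM hornerC /mpoly.mmap1 horner_prod; congr (_ * _).
by apply: eq_bigr => i _; rewrite horner_exp.
Qed.

(* Restrict to the line through [q] and [z]: there [W] is a nonzero univariate
   polynomial, so [f] vanishes identically on that line. *)
Lemma meval_eq0_of_mulr (W f : MP) (z : 'I_N -> R) : mpoly.meval z W != 0 ->
  (forall p, mpoly.meval p (f * W) = 0) -> forall q, mpoly.meval q f = 0.
Proof.
move=> Wz fW q.
pose h i : {poly R} := (q i)%:P + (z i - q i) *: 'X.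
have h0 i : (h i).[0] = q i by rewrite /h hornerD hornerC hornerZ hornerX mulr0 addr0.
have h1 i : (h i).[1] = z i by rewrite /h hornerD hornerC hornerZ hornerX mulr1 addrC subrK.
have fWh : mpoly.mmap polyC h f * mpoly.mmap polyC h W = 0.
  by apply: poly_eq0_of_horner => t; rewrite hornerM !horner_mmap -mpoly.mevalM.
have Wh : mpoly.mmap polyC h W != 0.
  by apply: contra_neq Wz => W0; rewrite -(mpoly.meval_eq _ h1) -horner_mmap W0 horner0.
move/eqP: fWh; rewrite mulf_eq0 (negbTE Wh) orbF => /eqP fh.
by rewrite -(mpoly.meval_eq _ h0) -horner_mmap fh horner0.
Qed.

Lemma meval_eq0_off_prod (I : Type) (s : seq I) (W : I -> MP) :
  (forall i, exists z, mpoly.meval z (W i) != 0) ->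
  forall f : MP,
  (forall p, mpoly.meval p (\prod_(i <- s) W i) != 0 -> mpoly.meval p f = 0) ->
  forall p, mpoly.meval p f = 0.
Proof.
move=> hW; elim: s => [|a s IH] f hf.
  by move=> p; apply: hf; rewrite big_nil mpoly.meval1 oner_neq0.
have [z Wz] := hW a; apply: (meval_eq0_of_mulr Wz); apply: IH => p ps.
rewrite mpoly.mevalM; have [->|Wa] := eqVneq (mpoly.meval p (W a)) 0.
  by rewrite mulr0.
by rewrite hf ?mul0r // big_cons mpoly.mevalM mulf_neq0.
Qed.

End MpolyVanishing.

Section ZariskiNonvanishing.
Variables (R : realType) (N : nat).
Local Notation MP := (mpoly.mpoly N R).

Lemma zariski_open_nonvanishing (P : MP) : zariski_open [set p | mpoly.meval p P != 0].
Proof.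
exists 1%N, (fun=> P); apply/seteqP; split => p /=.
  by move/negP; rewrite negbK => /eqP.
by move/(_ ord0)/eqP ->.
Qed.

Lemma zariski_dense_nonvanishing_prod (I : Type) (s : seq I) (W : I -> MP) :
  (forall i, exists z, mpoly.meval z (W i) != 0) ->
  zariski_dense [set p | mpoly.meval p (\prod_(i <- s) W i) != 0].
Proof.
move=> hW Z [k [f ->]] sub; apply/seteqP; split => // v _ i.
by apply: (@meval_eq0_off_prod _ _ _ s W hW (f i)) => p /sub; apply.
Qed.

End ZariskiNonvanishing.

Section PronyPolynomial.
Variable R : realType.
Variables n d : nat.
Local Notation N := (n + (n - d))%N.
Local Notation MP := (mpoly.mpoly N R).
Implicit Types p : 'I_N -> R.

Definition mcoord (k : nat) : MP :=
  if insub k is Some i then mpoly.mpolyX R (mpoly.mnm1 i) else 0.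

Lemma meval_mcoord p k : mpoly.meval p (mcoord k) = Defs.coord p k.
Proof.
by rewrite /mcoord /Defs.coord; case: insub => [i|]; rewrite ?mpoly.mevalXU ?mpoly.meval0.
Qed.

Definition lagrange_den_mpoly (i l : nat) : MP :=
  \prod_(k < d.+1 | (i + k != l)%N) (mcoord l - mcoord (i + k)).

Lemma meval_lagrange_den_mpoly p i l :
  increasing_knots p -> (i < n - d)%N -> (l < n)%N ->
  mpoly.meval p (lagrange_den_mpoly i l) = lagrange_den (xs p l) (window p i).
Proof.
move=> hx hi hl; rewrite rmorph_prod /lagrange_den /window big_map.
rewrite -[iota 0 d.+1]/(index_iota 0 d.+1) big_mkord; apply: eq_big => k.
  congr negb; apply/eqP/eqP => [-> //|]; apply: xs_inj => //.
  by have := ltn_ord k; lia.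
by move=> _ /=; rewrite mpoly.mevalB !meval_mcoord.
Qed.

Definition weight_mpoly (l : nat) : MP :=
  \sum_(i < n - d | (i <= l <= i + d)%N)
     mcoord (n + i) *
     \prod_(j < n - d | (j <= l <= j + d)%N && (j != i)) lagrange_den_mpoly j l.

Lemma meval_weight_mpoly p l : increasing_knots p -> (l < n)%N ->
  mpoly.meval p (weight_mpoly l) = knot_weight p (alphas p) l *
     \prod_(j < n - d | (j <= l <= j + d)%N) lagrange_den (xs p l) (window p j).
Proof.
move=> hx hl; rewrite raddf_sum /= /knot_weight mulr_suml; apply: eq_bigr => i il.
rewrite mpoly.mevalM meval_mcoord rmorph_prod /= (bigD1 i il) /=.
rewrite (eq_bigr (fun j : 'I_(n - d) => lagrange_den (xs p l) (window p j))); last first.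
  by move=> j _; rewrite meval_lagrange_den_mpoly.
have := lagrange_den_neq0 (xs p l) (window p i); rewrite /alphas /als => den_neq0.
by field.
Qed.

Lemma weight_mpoly_witness (l : 'I_n) :
  (d < n)%N -> exists z, mpoly.meval z (weight_mpoly l) != 0.
Proof.
move=> dn; pose i0 := minn l (n - d).-1.
have i0nd : (i0 < n - d)%N by rewrite /i0; have := ltn_ord l; lia.
(* knots [x_k = k] and the single nonzero coefficient [alpha_(i0+1) = 1] *)
pose z (j : 'I_N) : R := if (j < n)%N then (j : nat)%:R else ((j - n)%N == i0)%:R.
have z_xs k : (k < n)%N -> Defs.coord z k = k%:R.
  move=> kn; rewrite /Defs.coord; case: insubP => [j _ jk|]; first by rewrite /z jk kn.
  by move/negP; case; lia.
have z_als i : (i < n - d)%N -> Defs.coord z (n + i) = (i == i0)%:R.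
  move=> hi; rewrite /Defs.coord; case: insubP => [j _ ji|].
    by rewrite /z ji ltnNge leq_addr addKn.
  by move/negP; case; lia.
exists z; rewrite raddf_sum /= (bigD1 (Ordinal i0nd)) /=; last first.
  by rewrite /i0; have := ltn_ord l; lia.
rewrite [X in _ + X]big1 ?addr0 => [|i /andP [_ ii0]]; last first.
  rewrite mpoly.mevalM meval_mcoord z_als //.
  by move: ii0; rewrite -(inj_eq val_inj) /= => /negbTE ->; rewrite mul0r.
rewrite mpoly.mevalM meval_mcoord z_als // eqxx mul1r rmorph_prod /=.
apply/prodf_neq0 => j _; rewrite rmorph_prod; apply/prodf_neq0 => k kl /=.
rewrite mpoly.mevalB !meval_mcoord z_xs // z_xs; last first.
  by have := ltn_ord j; have := ltn_ord k; lia.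
by rewrite subr_eq0 eqr_nat eq_sym.
Qed.

Definition prony_mpoly : MP := \prod_(l < n) weight_mpoly l.

Lemma prony_mpoly_nonzero_weights p : increasing_knots p ->
  mpoly.meval p prony_mpoly != 0 -> nonzero_weights p.
Proof.
move=> hx; rewrite rmorph_prod => /prodf_neq0 P0 l.
have := P0 l isT; rewrite /= meval_weight_mpoly //.
by apply: contra_neq => ->; rewrite mul0r.
Qed.

End PronyPolynomial.

Section SimplexIntegral.
Variable R : realType.
Local Notation mu := (@lebesgue_measure R).
Local Open Scope ereal_scope.

(* No measurability is required: both integrals are suprema over simple functions. *)
Lemma ge0_le_integral_subset (D1 D2 : set R) (f1 f2 : R -> \bar R) :
  (forall x, D1 x -> 0 <= f1 x) -> (forall x, D2 x -> 0 <= f2 x) ->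
  (forall x, D1 x -> D2 x /\ f1 x <= f2 x) ->
  \int[mu]_(x in D1) f1 x <= \int[mu]_(x in D2) f2 x.
Proof.
move=> h1 h2 h12; rewrite !ge0_integralE //.
apply: ereal_sup_le => _ [h hh <-]; exists h => //= x.
apply: le_trans (hh x) _; rewrite /patch.
case: ifPn => [/set_mem /h12 [D2x le12]|_].
  by rewrite ifT // mem_set.
by case: ifPn => // /set_mem /h2.
Qed.

Lemma integral_cst_itv (a b r : R) : (a <= b)%R ->
  \int[mu]_(x in `[a, b]%classic) (cst r%:E) x = (r * (b - a))%:E.
Proof.
move=> ab; rewrite integral_cst; last exact: (measurable_itv `[a, b]).
have := lebesgue_measure_itv `[a, b]; move=> /= ->; rewrite lte_fin.
case: ltP => [_ //|ba]; have -> : b = a by apply/eqP; rewrite eq_le ab ba.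
by rewrite subrr mulr0 mule0.
Qed.

Lemma simplex_int_cons2 (A : set R) (v w : R) ws (s acc : R) :
  simplex_int A [:: v, w & ws] s acc =
  \int[mu]_(t in `[0%R, s]%classic) simplex_int A (w :: ws) (s - t) (acc + t * v).
Proof. by []. Qed.

Lemma simplex_int1 (A : set R) (v s acc : R) :
  simplex_int A [:: v] s acc = ((\1_A (acc + s * v)) : R)%:E.
Proof. by []. Qed.

Lemma simplex_int_ge0 (A : set R) (vs : seq R) (s acc : R) : 0 <= simplex_int A vs s acc.
Proof.
elim: vs s acc => [//|v [|w ws] IH] s acc.
  by rewrite simplex_int1 lee_fin indicE ler0n.
by rewrite simplex_int_cons2; apply: integral_ge0 => t _; exact: IH.
Qed.

Lemma simplex_int_le1 (A : set R) (vs : seq R) (s acc : R) :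
  (0 <= s <= 1)%R -> simplex_int A vs s acc <= 1.
Proof.
elim: vs s acc => [|v [|w ws] IH] s acc hs.
- by rewrite /= lee01.
- by rewrite simplex_int1 lee_fin indicE; case: (_ \in _); rewrite ?ler01.
rewrite simplex_int_cons2.
apply: (@le_trans _ _ (\int[mu]_(t in `[0%R, s]%classic) (cst 1%:E) t)).
  apply: ge0_le_integral_subset; first by move=> t _; exact: simplex_int_ge0.
    by move=> t _; rewrite /= lee01.
  move=> t ht; split => //; apply: IH.
  move: ht hs; rewrite /= in_itv /= => /andP [t0 ts] /andP [s0 s1].
  by apply/andP; split; lra.
move: hs => /andP [s0 s1]; rewrite integral_cst_itv // lee_fin; lra.
Qed.

(* [acc] is the contribution, of total mass [1 - s], of the points already integrated. *)
Lemma simplex_int_itvNy_eq0 (c : R) (vs : seq R) : (forall v, v \in vs -> c <= v)%R ->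
  forall s acc, (0 <= s)%R -> (c * (1 - s) <= acc)%R ->
  simplex_int `]-oo, c[%classic vs s acc = 0.
Proof.
elim: vs => [//|v [|w ws] IH] hv s acc hs hacc.
  rewrite simplex_int1 indicE mem_setE in_itv /=.
  have := hv v; rewrite inE eqxx => /(_ isT) cv.
  have : (c <= acc + s * v)%R by nra.
  by rewrite leNgt => /negbTE ->.
rewrite simplex_int_cons2; apply: integral0_eq => t; rewrite /= in_itv /= => /andP [t0 ts].
apply: IH; first by move=> y hy; apply: hv; rewrite inE hy orbT.
  lra.
have := hv v; rewrite inE eqxx => /(_ isT) cv; nra.
Qed.

Lemma simplex_int_itvNy_lb k : exists e : R, (0 < e)%R /\ forall vs, size vs = k.+1 ->
  forall Mx c acc s : R, (0 < s)%R -> (forall v, v \in vs -> v <= Mx)%R ->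
  (acc + s * Mx < c)%R -> (e * s ^+ k)%:E <= simplex_int `]-oo, c[%classic vs s acc.
Proof.
elim: k => [|k [e [e0 IH]]].
  exists 1%R; split => // [[|v [|]]] // _ Mx c acc s s0 hv hc.
  rewrite simplex_int1 indicE mem_setE in_itv /= expr0 mulr1 lee_fin.
  have := hv v; rewrite inE eqxx => /(_ isT) vM.
  by have -> : (acc + s * v < c)%R by nra.
exists (e / 2 ^+ k.+1)%R; split; first by rewrite divr_gt0 // exprn_gt0.
move=> [|v [|w ws]] // [hs] Mx c acc s s0 hv hc; rewrite simplex_int_cons2.
apply: (@le_trans _ _
  (\int[mu]_(t in `[0%R, (s / 2)%R]%classic) (cst (e * (s / 2) ^+ k)%:E) t)).
  rewrite integral_cst_itv; last by rewrite divr_ge0 // ltW.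
  rewrite lee_fin subr0 expr_div_n !exprS le_eqVlt; apply/orP; left; apply/eqP.
  have h2 : (2 ^+ k != 0 :> R)%R by rewrite expf_neq0 // pnatr_eq0.
  by field.
apply: ge0_le_integral_subset.
- move=> t _; have hs2 : (0 <= s / 2)%R by rewrite divr_ge0 // ltW.
  by rewrite /= lee_fin mulr_ge0 ?exprn_ge0 // ltW.
- by move=> t _; exact: simplex_int_ge0.
move=> t; rewrite /= !in_itv /= => /andP [t0 ts2]; split.
  by apply/andP; split => //; lra.
have hv0 : (v <= Mx)%R by apply: hv; rewrite inE eqxx.
have hst : (0 < s - t)%R by lra.
apply: (le_trans _ (IH (w :: ws) (f_equal S hs) Mx c (acc + t * v)%R (s - t)%R hst _ _)).
- rewrite lee_fin ler_pM2l // lerXn2r //; rewrite ?nnegrE; lra.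
- by move=> y hy; apply: hv; rewrite inE hy orbT.
- nra.
Qed.

Lemma ler_sum_norm_mem (l : seq R) (y : R) : y \in l -> (y <= \sum_(x <- l) `|x|)%R.
Proof.
elim: l => // a l IH; rewrite inE big_cons => /orP [/eqP -> | hy].
  by apply: le_trans (ler_norm a) _; rewrite lerDl sumr_ge0.
by apply: le_trans (IH hy) _; rewrite lerDr.
Qed.

(* Put almost all the mass on [v0]: the remaining points then stay below [c] and the
   uniform lower bound applies on an interval of parameters of positive length. *)
Lemma simplex_int_itvNy_gt0 (c v0 : R) (ws : seq R) (s acc : R) :
  (0 < s)%R -> (acc + s * v0 < c)%R -> 0 < simplex_int `]-oo, c[%classic (v0 :: ws) s acc.
Proof.
case: ws => [|w ws] s0 hc.
  by rewrite simplex_int1 indicE mem_setE in_itv /= hc lte01.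
have [e [e0 hlb]] := simplex_int_itvNy_lb (size ws).
pose Mx := (\sum_(y <- [:: v0, w & ws]) `|y|)%R.
have hM y : y \in [:: v0, w & ws] -> (y <= Mx)%R by apply: ler_sum_norm_mem.
have hv0 : (v0 <= Mx)%R by apply: hM; rewrite inE eqxx.
pose g := (c - (acc + s * v0))%R.
have g0 : (0 < g)%R by rewrite /g subr_gt0.
pose D := (2 * (Mx - v0 + 1))%R.
have D0 : (0 < D)%R by rewrite /D; lra.
pose del := Num.min (s / 2)%R (g / D)%R.
have := le_refl del; rewrite {2}/del le_min => /andP [d1 d2].
have dpos : (0 < del)%R by rewrite /del lt_min; apply/andP; split; [lra | exact: divr_gt0].
rewrite ler_pdivlMr // in d2.
have hk : (0 < e * (del / 2) ^+ size ws * (del / 2))%R.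
  by rewrite !mulr_gt0 // exprn_gt0 //; lra.
apply: (@lt_le_trans _ _ (\int[mu]_(t in `[(s - del)%R, (s - del / 2)%R]%classic)
   (cst (e * (del / 2) ^+ size ws)%:E) t)).
  rewrite integral_cst_itv; last lra.
  rewrite lte_fin; have -> : (s - del / 2 - (s - del) = del / 2)%R by field.
  exact: hk.
rewrite simplex_int_cons2; apply: ge0_le_integral_subset.
- move=> t _; rewrite /= lee_fin mulr_ge0 ?exprn_ge0 //; lra.
- by move=> t _; exact: simplex_int_ge0.
move=> t; rewrite /= !in_itv /= => /andP [t1 t2]; split.
  by apply/andP; split; lra.
have hst : (0 < s - t)%R by lra.
apply: (le_trans _ (hlb (w :: ws) erefl Mx c (acc + t * v0)%R (s - t)%R hst _ _)).
- rewrite lee_fin ler_pM2l // lerXn2r //; rewrite ?nnegrE; lra.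
- by move=> y hy; apply: hM; rewrite inE hy orbT.
- have hMv : (0 <= Mx - v0)%R by lra.
  have : ((s - t) * (Mx - v0) <= del * (Mx - v0))%R by apply: ler_wpM2r => //; lra.
  rewrite /g /D in d2 *; nra.
Qed.

End SimplexIntegral.

Section SplineCone.
Variable R : realType.
Variables n d : nat.
Local Notation N := (n + (n - d))%N.
Variable p : 'I_N -> R.
Hypothesis hx : increasing_knots p.

Lemma simplex_spline_window_eq0 i (c : R) : (forall v, v \in window p i -> c <= v) ->
  simplex_spline (window p i) `]-oo, c[%classic = 0.
Proof.
by move=> hv; rewrite /simplex_spline simplex_int_itvNy_eq0 ?subrr ?mulr0.
Qed.

Lemma simplex_spline_window_gt0 i (c : R) : xs p i < c ->
  0 < simplex_spline (window p i) `]-oo, c[%classic.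
Proof.
move=> ic; rewrite /simplex_spline /window /= addn0.
set ws := map _ (iota 1 d).
have pos : (0 < simplex_int `]-oo, c[%classic (xs p i :: ws) 1 0)%E.
  by apply: simplex_int_itvNy_gt0; rewrite ?ltr01 // add0r mul1r.
have le1 : (simplex_int `]-oo, c[%classic (xs p i :: ws) 1 0 <= 1)%E.
  by apply: simplex_int_le1; rewrite ler01 lexx.
by rewrite mulr_gt0 ?ltr0n ?fact_gt0 // fine_gt0 // pos (le_lt_trans le1) ?ltry.
Qed.

(* Test against the half-lines [(-oo, x_(i+1))]: by induction on [i], only the
   [i]-th spline can charge it among those with nonzero coefficient. *)
Lemma spline_comb_eq0 (g : 'I_(n - d) -> R) :
  (forall A : set R, measurable A -> spline_comb p g A = 0) -> g =1 0.
Proof.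
move=> g0; suff gi0 m (i : 'I_(n - d)) : (i : nat) = m -> g i = 0 by move=> i; exact: gi0.
elim/ltn_ind: m i => m IH i im.
pose c := if (i.+1 < n)%N then xs p i.+1 else xs p i + 1.
have ic : xs p i < c by rewrite /c; case: ifP => [/hx //|_]; rewrite ltrDl ltr01.
have := g0 `]-oo, c[%classic (measurable_itv _).
rewrite /spline_comb (bigD1 i) //= big1 ?addr0 => [|j ji]; last first.
  case: (ltngtP j i) => [lt_ji|lt_ij|/val_inj eq_ji]; last by rewrite eq_ji eqxx in ji.
    by rewrite (IH j) ?mul0r // -im.
  have i1n : (i.+1 < n)%N by have := ltn_ord j; lia.
  rewrite simplex_spline_window_eq0 ?mulr0 // => v /mapP [k].
  rewrite mem_iota => /andP [_ kd] ->.
  rewrite /c i1n; have : (i.+1 <= j + k)%N by lia.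
  rewrite leq_eqVlt => /orP [/eqP -> //| lt_ijk].
  by apply/ltW/(xs_lt hx lt_ijk); have := ltn_ord j; lia.
by move/eqP; rewrite mulf_eq0 (gt_eqF (simplex_spline_window_gt0 ic)) orbF => /eqP.
Qed.

Lemma in_spline_cone_prony :
  in_spline_cone p (spline_comb p (fun i => als p i)) <->
  forall r : 'I_(n - d), 0 <= (invmx (Amat p) *m bvec n d (prony p)) r 0.
Proof.
rewrite bvec_prony mulKmx ?Amat_unit //; split=> [[beta [beta0 eq_comb]] r|alpha0].
  have comb0 A : measurable A -> spline_comb p (fun i => als p i - beta i) A = 0.
    move=> mA; rewrite /spline_comb; under eq_bigr do rewrite mulrBl.
    by rewrite sumrB; have := eq_comb A mA; rewrite /spline_comb => ->; apply: subrr.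
  by rewrite mxE; move/eqP: (spline_comb_eq0 comb0 r); rewrite subr_eq0 => /eqP ->.
by exists (fun i => als p i); split=> // i; have := alpha0 i; rewrite mxE.
Qed.

End SplineCone.

Section PronyInjective.
Variable R : realType.
Variables n d : nat.
Local Notation N := (n + (n - d))%N.
Implicit Types p : 'I_N -> R.

Lemma prony_point_ext p1 p2 :
  (forall k, (k < n)%N -> xs p1 k = xs p2 k) ->
  (forall i, (i < n - d)%N -> als p1 i = als p2 i) -> p1 = p2.
Proof.
move=> xs_eq als_eq; apply: funext => j.
have coordE p : p j = Defs.coord p j by rewrite /Defs.coord valK.
rewrite !coordE; case: (ltnP j n) => [|nj]; first exact: xs_eq.
have /als_eq : (j - n < n - d)%N by have := ltn_ord j; lia.
by rewrite /als subnKC.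
Qed.

(* The kernel of the common Hankel matrix locates the knots of both points. *)
Lemma knots_prony_eq p1 p2 :
  increasing_knots p1 -> nonzero_weights p1 ->
  increasing_knots p2 -> nonzero_weights p2 ->
  prony p1 = prony p2 -> knots p1 = knots p2.
Proof.
move=> hx1 hw1 hx2 hw2 eq12.
have [u u0 Hu] := exists_ker_neq0 (hankel n d (prony p1)) (ltnSn n).
have Hu2 := Hu; rewrite eq12 in Hu2.
apply: lt_sorted_eq; rewrite ?sorted_knots // => t.
apply/mem_knotsP/mem_knotsP.
  by rewrite -(root_kerpoly_prony hx1 hw1 Hu u0) (root_kerpoly_prony hx2 hw2 Hu2 u0).
by rewrite -(root_kerpoly_prony hx2 hw2 Hu2 u0) (root_kerpoly_prony hx1 hw1 Hu u0).
Qed.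

Lemma prony_inj p1 p2 :
  increasing_knots p1 -> nonzero_weights p1 ->
  increasing_knots p2 -> nonzero_weights p2 ->
  prony p1 = prony p2 -> p1 = p2.
Proof.
move=> hx1 hw1 hx2 hw2 eq12.
have xs_eq k : (k < n)%N -> xs p1 k = xs p2 k.
  move=> kn; have /(congr1 (fun s => nth 0 s k)) := knots_prony_eq hx1 hw1 hx2 hw2 eq12.
  by rewrite !(nth_map 0%N) ?size_iota // nth_iota.
have A_eq : Amat p1 = Amat p2.
  apply/matrixP => r i; rewrite !mxE; congr hcomp; apply/eq_in_map => k.
  by rewrite mem_iota => /andP [_ kd]; apply: xs_eq; have := ltn_ord i; lia.
have /(Amat_prony_eq _ hx2) /colP al_eq : Amat p2 *m alcol p1 = bvec n d (prony p2).
  by rewrite -A_eq -eq12 bvec_prony.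
by apply: prony_point_ext => // i id; have := al_eq (Ordinal id); rewrite !mxE.
Qed.

End PronyInjective.

Unset Implicit Arguments.

Theorem theorem2p14 (R : realType) (d n : nat) (hn : (d + 1 <= n)%N) :
  exists U : set ('I_(n + (n - d)) -> R),
    zariski_open U /\ zariski_dense U /\
    {in U `&` @good_domain R n d &, injective (@prony R n d)} /\
    forall p, (U `&` @good_domain R n d) p ->
      let M := prony p in
      [/\ \rank (kermx (hankel n d M)^T) = 1%N,
          (forall u : 'cV[R]_n.+1, hankel n d M *m u = 0 -> u != 0 ->
             forall t : R, root (kerpoly u) t <-> exists2 k, (k < n)%N & t = xs p k),
          (forall beta : 'cV[R]_(n - d),
             Amat p *m beta = bvec n d M <-> beta = alcol p) &
          (in_spline_cone p (spline_comb p (fun i => als p i)) <->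
             forall r : 'I_(n - d), 0 <= (invmx (Amat p) *m bvec n d M) r 0)].
Proof.
pose U := [set p | mpoly.meval p (@prony_mpoly R n d) != 0]; exists U.
have generic p : (U `&` @good_domain R n d) p ->
    increasing_knots p /\ nonzero_weights p.
  by case=> P0 [hx _]; split=> //; apply: prony_mpoly_nonzero_weights.
split; first exact: zariski_open_nonvanishing.
split.
  apply: zariski_dense_nonvanishing_prod => l.
  by apply: weight_mpoly_witness; rewrite -addn1.
split=> [p1 p2 /set_mem /generic [hx1 hw1] /set_mem /generic [hx2 hw2]|p /generic [hx hw]].
  exact: prony_inj.
split; [exact: rank_ker_hankel_prony | exact: root_kerpoly_prony |
        move=> beta; exact: Amat_prony_eq | exact: in_spline_cone_prony].
Qed.
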